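(* Let $a, b$ be positive integers with $b > 2a$, and let $T_{a,b} = \{C_{i,1} : 1 \le i \le 2a+1\} \cup \{C_{a+1,j} : 2 \le j \le b+1\}$, of size $n = 2a+b+1$. Then on the $n \times n$ board, $$\mathrm{cp}_{\mathrm{fixed}}(T_{a,b}) = \left\lceil \frac{b+1}{2a+1} \right\rceil.$$
   Context: For integers $i,j$, $C_{i,j}$ denotes the unit square cell in column $i$ and row $j$ of the integer grid (columns numbered left to right, rows numbered top to bottom). A polyomino is a finite set of cells; its size is its number of cells. For a polyomino $\mathcal{P}$ of size $n$ the board is $\mathbb{B} = \{C_{i,j} : 1 \le i,j \le n\}$. The shift of $\mathcal{P}$ by integers $(c,d)$ is $\mathcal{P}+(c,d) = \{C_{x+c,y+d} : C_{x,y} \in \mathcal{P}\}$; a fixed copy of $\mathcal{P}$ is any shift of $\mathcal{P}$ (no rotations). A set of polyominoes is a valid arrangement if each is contained in $\mathbb{B}$ and they are pairwise disjoint. A fixed packing of $\mathcal{P}$ is a set of fixed copies of $\mathcal{P}$ forming a valid arrangement such that adding any further fixed copy of $\mathcal{P}$ yields an invalid arrangement. The clumsy fixed packing number $\mathrm{cp}_{\mathrm{fixed}}(\mathcal{P})$ is the minimum number of polyominoes in a fixed packing of $\mathcal{P}$ on the $n \times n$ board. *)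

From Stdlib Require Import ZArith List Arith.
Import ListNotations.
Open Scope Z_scope.

(* C_{i,j} = (i, j) : column i, row j *)
Definition cell := (Z * Z)%type.

Definition cell_eq_dec : forall x y : cell, {x = y} + {x <> y}.
Proof. decide equality; apply Z.eq_dec. Defined.

(* A polyomino is a finite set of cells, given by a list (duplicates irrelevant). *)
Definition polyomino := list cell.

Definition psize (P : polyomino) : nat := length (nodup cell_eq_dec P).

Definition shift (P : polyomino) (v : Z * Z) : polyomino :=
  map (fun x : cell => (fst x + fst v, snd x + snd v)) P.

Definition in_board (n : Z) (x : cell) : Prop :=
  1 <= fst x <= n /\ 1 <= snd x <= n.

(* A family of fixed copies of P is encoded by its (distinct) list of shift
   vectors S; the copies are the shift P v, v in S. *)
Definition valid_arrangement (n : Z) (P : polyomino) (S : list (Z * Z)) : Prop :=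
  NoDup S /\
  (forall v, In v S -> forall x, In x (shift P v) -> in_board n x) /\
  (forall v w, In v S -> In w S -> v <> w ->
     forall x, In x (shift P v) -> ~ In x (shift P w)).

Definition fixed_packing (n : Z) (P : polyomino) (S : list (Z * Z)) : Prop :=
  valid_arrangement n P S /\
  forall v, ~ In v S -> ~ valid_arrangement n P (v :: S).

Definition cp_fixed_is (P : polyomino) (k : nat) : Prop :=
  let n := Z.of_nat (psize P) in
  (exists S, fixed_packing n P S /\ length S = k) /\
  (forall S, fixed_packing n P S -> (k <= length S)%nat).

Definition T_ab (a b : nat) : polyomino :=
  map (fun i => (Z.of_nat i, 1)) (seq 1 (2 * a + 1)) ++
  map (fun j => (Z.of_nat a + 1, Z.of_nat j)) (seq 2 b).

(* A copy of T_{a,b} shifted by (c, d) lies on the board iff 0 <= c <= b and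
   0 <= d <= 2a, and, as b > 2a, two such copies meet iff their column offsets
   differ by at most a, or by at most 2a when their row offsets agree.  Hence a
   valid arrangement is maximal iff every column offset x in [0, b] is within a
   of the offset of one of its copies: otherwise one of the rows 0, 1, 2 carries
   no copy within 2a of x, and the copy (x, row) can be added.  Counting windows
   of width 2a + 1 gives b + 1 <= (2a + 1) k, and copies at column offsets
   a, 3a + 1, 5a + 2, ... show that k = ceil((b + 1) / (2a + 1)) suffice. *)

From Stdlib Require Import ZArith List Lia Classical.
Open Scope Z_scope.

Lemma in_shift_T (a b : nat) (c d : Z) (x : cell) :
  In x (shift (T_ab a b) (c, d)) <->
  (snd x = d + 1 /\ c + 1 <= fst x <= c + 2 * Z.of_nat a + 1) \/
  (fst x = c + Z.of_nat a + 1 /\ d + 2 <= snd x <= d + Z.of_nat b + 1).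
Proof.
  unfold shift, T_ab. rewrite map_app, in_app_iff, !map_map.
  split.
  - intros [H | H]; apply in_map_iff in H as [i [<- Hi]]; apply in_seq in Hi;
      cbn [fst snd]; [left | right]; lia.
  - destruct x as [x y]; cbn [fst snd].
    intros [[Hy Hx] | [Hx Hy]]; [left | right]; apply in_map_iff.
    + exists (Z.to_nat (x - c)). rewrite Z2Nat.id by lia.
      split; [f_equal; lia | apply in_seq; lia].
    + exists (Z.to_nat (y - d)). rewrite Z2Nat.id by lia.
      split; [f_equal; lia | apply in_seq; lia].
Qed.

Lemma NoDup_T (a b : nat) : NoDup (T_ab a b).
Proof.
  unfold T_ab. apply NoDup_app.
  - apply NoDup_map_NoDup_ForallPairs; [intros i j _ _ E; injection E; lia | apply seq_NoDup].
  - apply NoDup_map_NoDup_ForallPairs; [intros i j _ _ E; injection E; lia | apply seq_NoDup].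
  - intros x Hbar Hstem.
    apply in_map_iff in Hbar as [i [<- _]].
    apply in_map_iff in Hstem as [j [E Hj]]. apply in_seq in Hj. injection E; lia.
Qed.

Lemma psize_T (a b : nat) : psize (T_ab a b) = (2 * a + b + 1)%nat.
Proof.
  unfold psize. rewrite nodup_fixed_point by apply NoDup_T.
  unfold T_ab. rewrite length_app, !length_map, !length_seq. lia.
Qed.

Definition window (c : Z) (r : nat) : list Z :=
  map (fun i => c - Z.of_nat r + Z.of_nat i) (seq 0 (2 * r + 1)).

Lemma in_window (c : Z) (r : nat) (x : Z) :
  Z.abs (c - x) <= Z.of_nat r -> In x (window c r).
Proof.
  intros Hcx. apply in_map_iff. exists (Z.to_nat (x - c + Z.of_nat r)).
  rewrite Z2Nat.id by lia. split; [lia | apply in_seq; lia].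
Qed.

Lemma length_le_of_near (r : nat) (L S : list Z) :
  NoDup S -> (forall x, In x S -> exists c, In c L /\ Z.abs (c - x) <= Z.of_nat r) ->
  (length S <= length L * (2 * r + 1))%nat.
Proof.
  intros Hnd Hnear.
  rewrite <- (flat_map_constant_length (fun c => window c r) L)
    by (intros; unfold window; now rewrite length_map, length_seq).
  apply NoDup_incl_length; [exact Hnd |].
  intros x Hx. apply in_flat_map.
  destruct (Hnear x Hx) as [c [Hc Hcx]].
  exists c. split; [exact Hc | now apply in_window].
Qed.

Section Packings.

Variables a b : nat.
Hypothesis Ha : (0 < a)%nat.
Hypothesis Hab : (2 * a < b)%nat.

Local Notation A := (Z.of_nat a).
Local Notation B := (Z.of_nat b).
Local Notation n := (Z.of_nat (2 * a + b + 1)).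
Local Notation T := (T_ab a b).

Definition placeable (v : Z * Z) : Prop :=
  0 <= fst v <= B /\ 0 <= snd v <= 2 * A.

Definition clash (v w : Z * Z) : Prop :=
  (snd v = snd w /\ Z.abs (fst v - fst w) <= 2 * A) \/ Z.abs (fst v - fst w) <= A.

Definition covers (S : list (Z * Z)) : Prop :=
  forall x, 0 <= x <= B -> exists v, In v S /\ Z.abs (fst v - x) <= A.

Lemma clash_sym (v w : Z * Z) : clash v w -> clash w v.
Proof. unfold clash. lia. Qed.

Lemma shift_T_in_board_iff (v : Z * Z) :
  (forall x, In x (shift T v) -> in_board n x) <-> placeable v.
Proof.
  destruct v as [c d]. unfold placeable, in_board. cbn [fst snd]. split.
  - intros Hin.
    pose proof (Hin (c + 1, d + 1) ltac:(apply in_shift_T; cbn [fst snd]; lia)) as Hleft.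
    pose proof (Hin (c + 2 * A + 1, d + 1) ltac:(apply in_shift_T; cbn [fst snd]; lia)) as Hright.
    pose proof (Hin (c + A + 1, d + B + 1) ltac:(apply in_shift_T; cbn [fst snd]; lia)) as Hfoot.
    cbn [fst snd] in Hleft, Hright, Hfoot. lia.
  - intros Hv x Hx. apply in_shift_T in Hx. lia.
Qed.

(* When the row offsets differ, b > 2a makes the stem of the upper copy cross
   the bar row of the lower one. *)
Lemma shift_T_meet_iff (v w : Z * Z) :
  placeable v -> placeable w ->
  (exists x, In x (shift T v) /\ In x (shift T w)) <-> clash v w.
Proof.
  destruct v as [c d], w as [c' d']. unfold placeable, clash. cbn [fst snd].
  intros Hv Hw. split.
  - intros [x [Hx Hx']]. apply in_shift_T in Hx, Hx'. lia.
  - intros Hcl. destruct (Z.lt_total d d') as [Hlt | [<- | Hgt]].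
    + exists (c + A + 1, d' + 1). rewrite !in_shift_T. cbn [fst snd]. lia.
    + exists (Z.max c c' + 1, d + 1). rewrite !in_shift_T. cbn [fst snd]. lia.
    + exists (c' + A + 1, d + 1). rewrite !in_shift_T. cbn [fst snd]. lia.
Qed.

Lemma valid_arrangement_T_iff (S : list (Z * Z)) :
  valid_arrangement n T S <->
  NoDup S /\ (forall v, In v S -> placeable v) /\
  (forall v w, In v S -> In w S -> v <> w -> ~ clash v w).
Proof.
  unfold valid_arrangement. split.
  - intros [Hnd [Hbd Hdj]].
    assert (Hpl : forall v, In v S -> placeable v)
      by (intros v Hv; apply shift_T_in_board_iff, Hbd, Hv).
    split; [exact Hnd | split; [exact Hpl |]].
    intros v w Hv Hw Hne Hcl.
    apply (shift_T_meet_iff v w (Hpl v Hv) (Hpl w Hw)) in Hcl as [x [Hx Hx']].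
    exact (Hdj v w Hv Hw Hne x Hx Hx').
  - intros [Hnd [Hpl Hcl]]. split; [exact Hnd | split].
    + intros v Hv. apply shift_T_in_board_iff, Hpl, Hv.
    + intros v w Hv Hw Hne x Hx Hx'.
      apply (Hcl v w Hv Hw Hne), shift_T_meet_iff; eauto.
Qed.

Lemma free_row_exists (S : list (Z * Z)) (x : Z) :
  (forall v w, In v S -> In w S -> v <> w -> A < Z.abs (fst v - fst w)) ->
  (forall v, In v S -> A < Z.abs (fst v - x)) ->
  exists r, 0 <= r <= 2 /\ forall v, In v S -> snd v = r -> 2 * A < Z.abs (fst v - x).
Proof.
  intros Hsep Hfar. apply NNPP. intros Hnone.
  assert (Hocc : forall r, 0 <= r <= 2 ->
            exists v, In v S /\ snd v = r /\ Z.abs (fst v - x) <= 2 * A).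
  { intros r Hr. apply NNPP. intros Hfree. apply Hnone. exists r. split; [exact Hr |].
    intros v Hv Hvr. apply Z.nle_gt. intros Hnear. apply Hfree. eauto. }
  destruct (Hocc 0 ltac:(lia)) as [v0 [H0 [E0 F0]]].
  destruct (Hocc 1 ltac:(lia)) as [v1 [H1 [E1 F1]]].
  destruct (Hocc 2 ltac:(lia)) as [v2 [H2 [E2 F2]]].
  pose proof (Hsep v0 v1 H0 H1 ltac:(congruence)).
  pose proof (Hsep v0 v2 H0 H2 ltac:(congruence)).
  pose proof (Hsep v1 v2 H1 H2 ltac:(congruence)).
  pose proof (Hfar v0 H0). pose proof (Hfar v1 H1). pose proof (Hfar v2 H2).
  (* Three offsets pairwise more than a apart cannot fit into the two
     windows a < |c - x| <= 2a, each of which has only a elements. *)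
  lia.
Qed.

Lemma fixed_packing_T_iff (S : list (Z * Z)) :
  fixed_packing n T S <-> valid_arrangement n T S /\ covers S.
Proof.
  split.
  - intros [Hval Hmax]. split; [exact Hval |].
    pose proof (proj1 (valid_arrangement_T_iff S) Hval) as [Hnd [Hpl Hcl]].
    intros x Hx. apply NNPP. intros Hunc.
    assert (Hfar : forall v, In v S -> A < Z.abs (fst v - x)).
    { intros v Hv. apply Z.nle_gt. intros Hnear. apply Hunc. eauto. }
    destruct (free_row_exists S x) as [r [Hr Hfree]]; [| exact Hfar |].
    { intros v w Hv Hw Hne. specialize (Hcl v w Hv Hw Hne). unfold clash in Hcl. lia. }
    assert (Hfresh : forall w, In w S -> ~ clash (x, r) w).
    { intros w Hw. specialize (Hfar w Hw). unfold clash. cbn [fst snd].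
      destruct (Z.eq_dec (snd w) r) as [E | E]; [specialize (Hfree w Hw E) |]; lia. }
    assert (Hnew : ~ In (x, r) S) by (intros Hin; specialize (Hfar _ Hin); cbn [fst] in Hfar; lia).
    apply (Hmax (x, r) Hnew), valid_arrangement_T_iff.
    split; [constructor; assumption | split].
    + intros v [<- | Hv]; [unfold placeable; cbn [fst snd]; lia | auto].
    + intros v w [<- | Hv] [<- | Hw] Hne; try congruence; auto.
      intros Hvw. exact (Hfresh v Hv (clash_sym _ _ Hvw)).
  - intros [Hval Hcov]. split; [exact Hval |].
    intros v Hv Hext. apply valid_arrangement_T_iff in Hext as [_ [Hpl Hcl]].
    destruct (Hpl v (or_introl eq_refl)) as [Hc _].
    destruct (Hcov (fst v) Hc) as [w [Hw Hwv]].
    apply (Hcl v w (or_introl eq_refl) (or_intror Hw)); [intros ->; contradiction |].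
    unfold clash. lia.
Qed.

Lemma covers_length (S : list (Z * Z)) :
  covers S -> (b + 1 <= length S * (2 * a + 1))%nat.
Proof.
  intros Hcov.
  replace (b + 1)%nat with (length (map Z.of_nat (seq 0 (b + 1))))
    by now rewrite length_map, length_seq.
  rewrite <- (length_map fst S).
  apply length_le_of_near.
  - apply NoDup_map_NoDup_ForallPairs; [intros i j _ _; lia | apply seq_NoDup].
  - intros x Hx. apply in_map_iff in Hx as [i [<- Hi]]. apply in_seq in Hi.
    destruct (Hcov (Z.of_nat i)) as [v [Hv Hvx]]; [lia |].
    exists (fst v). split; [now apply in_map | exact Hvx].
Qed.

Section Spread.

Variable k : nat.
Hypothesis Hk_tight : ((2 * a + 1) * (k - 1) <= b)%nat.
Hypothesis Hk_enough : (b + 1 <= (2 * a + 1) * k)%nat.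

(* Only the last copy can be clipped to column b; it may then be closer than
   2a + 1 to its neighbour, so it goes one row lower. *)
Definition spread_col (i : nat) : Z := Z.min (A + (2 * A + 1) * Z.of_nat i) B.
Definition spread_row (i : nat) : Z := if (S i <? k)%nat then 0 else 1.
Definition spread : list (Z * Z) := map (fun i => (spread_col i, spread_row i)) (seq 0 k).

Lemma spread_col_gap (i j : nat) : (i < j < k)%nat ->
  A < spread_col j - spread_col i /\
  ((S j < k)%nat -> 2 * A < spread_col j - spread_col i).
Proof.
  intros Hijk. unfold spread_col.
  assert (Hi : (2 * A + 1) * Z.of_nat i + (2 * A + 1) <= B).
  { assert ((2 * a + 1) * S i <= (2 * a + 1) * (k - 1))%nat
      by (apply Nat.mul_le_mono_l; lia).
    lia. }
  rewrite (Z.min_l (A + (2 * A + 1) * Z.of_nat i)) by lia.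
  split.
  - destruct (Z.min_spec (A + (2 * A + 1) * Z.of_nat j) B) as [[_ ->] | [_ ->]]; nia.
  - intros Hjk. rewrite Z.min_l by nia. nia.
Qed.

Lemma spread_no_clash (i j : nat) : (i < j < k)%nat ->
  ~ clash (spread_col i, spread_row i) (spread_col j, spread_row j).
Proof.
  intros Hijk. destruct (spread_col_gap i j Hijk) as [Hgap Hgap_row].
  unfold clash, spread_row. cbn [fst snd].
  destruct (Nat.ltb_spec (S i) k), (Nat.ltb_spec (S j) k); lia.
Qed.

Lemma spread_valid : valid_arrangement n T spread.
Proof.
  assert (Hdistinct : forall i j, (i < k)%nat -> (j < k)%nat -> i <> j ->
            ~ clash (spread_col i, spread_row i) (spread_col j, spread_row j)).
  { intros i j Hi Hj Hne. destruct (Nat.lt_gt_cases i j) as [[Hlt | Hgt] _]; [exact Hne | |].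
    - now apply spread_no_clash.
    - intros Hcl. apply (spread_no_clash j i); [lia | now apply clash_sym]. }
  apply valid_arrangement_T_iff. split; [| split].
  - apply NoDup_map_NoDup_ForallPairs; [| apply seq_NoDup].
    intros i j Hi Hj E. apply in_seq in Hi, Hj.
    destruct (Nat.eq_dec i j) as [| Hne]; [assumption | exfalso].
    apply (Hdistinct i j); [lia | lia | exact Hne |].
    rewrite E. unfold clash. lia.
  - intros v Hv. apply in_map_iff in Hv as [i [<- Hi]]. apply in_seq in Hi.
    unfold placeable, spread_col, spread_row. cbn [fst snd].
    destruct (Nat.ltb_spec (S i) k); lia.
  - intros v w Hv Hw Hne.
    apply in_map_iff in Hv as [i [<- Hi]], Hw as [j [<- Hj]]. apply in_seq in Hi, Hj.
    apply Hdistinct; [lia | lia | congruence].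
Qed.

Lemma spread_covers : covers spread.
Proof.
  intros x Hx.
  pose proof (Z.div_mod x (2 * A + 1) ltac:(lia)) as Hdiv.
  pose proof (Z.mod_pos_bound x (2 * A + 1) ltac:(lia)) as Hmod.
  set (q := x / (2 * A + 1)) in Hdiv.
  assert (Hq : 0 <= q < Z.of_nat k) by nia.
  exists (spread_col (Z.to_nat q), spread_row (Z.to_nat q)).
  split; [apply in_map_iff; exists (Z.to_nat q); split; [reflexivity | apply in_seq; lia] |].
  unfold spread_col. cbn [fst]. rewrite Z2Nat.id by lia.
  destruct (Z.min_spec (A + (2 * A + 1) * q) B) as [[_ ->] | [Hclip ->]]; lia.
Qed.

Lemma spread_packing : fixed_packing n T spread.
Proof. apply fixed_packing_T_iff. exact (conj spread_valid spread_covers). Qed.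

Lemma length_spread : length spread = k.
Proof. unfold spread. now rewrite length_map, length_seq. Qed.

End Spread.

End Packings.

Theorem theorem7 (a b : nat) :
  (0 < a)%nat -> (0 < b)%nat -> (2 * a < b)%nat ->
  psize (T_ab a b) = (2 * a + b + 1)%nat /\
  cp_fixed_is (T_ab a b) ((b + 1 + 2 * a) / (2 * a + 1))%nat.
Proof.
  intros Ha _ Hab. split; [apply psize_T |].
  unfold cp_fixed_is. rewrite psize_T.
  set (k := ((b + 1 + 2 * a) / (2 * a + 1))%nat).
  assert (Hk : ((2 * a + 1) * (k - 1) <= b /\ b + 1 <= (2 * a + 1) * k)%nat).
  { pose proof (Nat.div_mod (b + 1 + 2 * a) (2 * a + 1) ltac:(lia)) as Hdiv.
    pose proof (Nat.mod_upper_bound (b + 1 + 2 * a) (2 * a + 1) ltac:(lia)) as Hmod.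
    fold k in Hdiv. nia. }
  split.
  - exists (spread a b k). split.
    + apply spread_packing; tauto.
    + apply length_spread.
  - intros S HS.
    apply fixed_packing_T_iff, proj2, covers_length in HS; [| assumption..].
    apply Nat.lt_succ_r, Nat.div_lt_upper_bound; nia.
Qed.
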